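(* For every automaton $M$ and every node $s$, $\mathit{tauclose\_comp}\ M\ s = \mathit{tauclose}\ M\ s$.
   Context: Actions are $\mathit{NoAct}$ (silent) and $\mathit{AssAct}\ x\ v$. An edge is a record $(\mathit{source},\mathit{action},\mathit{dest})$; an automaton over a node type $N$ is a record with a finite list $\mathit{nodes}$ of nodes, a list $\mathit{edges}$ of edges and an initial node $\mathit{init\_s}$. $\mathit{tauclose\_step}\ M\ s\ X = \{s\}\cup X\cup\{n\in\mathit{nodes}(M) : \exists e\in\mathit{edges}(M).\ \mathit{source}\ e\in X \wedge \mathit{action}\ e=\mathit{NoAct}\wedge \mathit{dest}\ e=n\}$ for $X\subseteq N$; it is monotone in $X$, and $\mathit{tauclose}\ M\ s$ is the least fixed point of $X\mapsto\mathit{tauclose\_step}\ M\ s\ X$. $\mathit{tauclose\_comp\_aux}\ M\ s\ X = X$ if $\mathit{tauclose\_step}\ M\ s\ X = X$, and otherwise $\mathit{tauclose\_comp\_aux}\ M\ s\ X = \mathit{tauclose\_comp\_aux}\ M\ s\ (\mathit{tauclose\_step}\ M\ s\ X)$ (this recursion terminates). $\mathit{tauclose\_comp}\ M\ s = \mathit{tauclose\_comp\_aux}\ M\ s\ \emptyset$. *)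

From HB Require Import structures.
From mathcomp Require Import all_boot.
From mathcomp Require Import finmap zify.
From mathcomp Require Import boolp classical_sets.
From Stdlib Require Import Recdef.
From Stdlib Require List.

Set Implicit Arguments.
Unset Strict Implicit.
Unset Printing Implicit Defensive.

Local Open Scope fset_scope.

Inductive action (Var Val : Type) : Type :=
| NoAct : action Var Val
| AssAct : Var -> Val -> action Var Val.
Arguments NoAct {Var Val}.

Definition is_NoAct {Var Val : Type} (a : action Var Val) : bool :=
  if a is NoAct then true else false.

Record edge (N Var Val : Type) : Type := Edge {
  source : N;
  act : action Var Val;
  dest : N }.

Record automaton (N Var Val : Type) : Type := Automaton {
  nodes : seq N;
  edges : seq (edge N Var Val);
  init_s : N }.

Section Tauclose.
Variables (N : choiceType) (Var Val : Type).
Implicit Types (M : automaton N Var Val) (s : N).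

Definition tauclose_step M s (X : set N) : set N :=
  ([set s] `|` X `|`
  [set n | n \in nodes M /\
     exists2 e, List.In e (edges M) &
       [/\ X (source e), act e = NoAct & dest e = n]])%classic.

(* Least fixed point (Knaster–Tarski): intersection of all pre-fixed points. *)
Definition tauclose M s : set N :=
  (\bigcap_(X in [set X | tauclose_step M s X `<=` X]) X)%classic.

Definition tauclose_stepf M s (X : {fset N}) : {fset N} :=
  [fset s] `|` X `|`
  [fset n in nodes M | has (fun e => [&& source e \in X, is_NoAct (act e)
                                      & dest e == n]) (edges M)].

Definition tc_universe M s : {fset N} := [fset s] `|` [fset n in nodes M].

Definition tc_measure M s (X : {fset N}) : nat :=
  #|` X `|` tc_universe M s| - #|` X|.

Lemma tauclose_stepf_decr M s X :
  tauclose_stepf M s X != X ->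
  tc_measure M s (tauclose_stepf M s X) < tc_measure M s X.
Proof.
move=> neq; rewrite /tc_measure.
set Y := tauclose_stepf M s X; set U := tc_universe M s.
have XY : X `<=` Y.
  by apply/fsubsetP=> x xX; rewrite /Y /tauclose_stepf !inE xX orbT.
have YXU : Y `<=` X `|` U.
  apply/fsubsetP=> x; rewrite /Y /tauclose_stepf /U /tc_universe !inE.
  by case/orP=> [/orP[->|->]|/andP[-> _]]; rewrite ?orbT.
have eqU : Y `|` U = X `|` U.
  apply/eqP; rewrite eqEfsubset; apply/andP; split.
    by rewrite fsubUset YXU fsubsetUr.
  by rewrite fsetSU.
have ltXY : #|` X| < #|` Y|.
  apply: fproper_ltn_card; rewrite fproperEneq XY andbT.
  by rewrite eq_sym.
have leY : #|` Y| <= #|` X `|` U| by apply: fsubset_leq_card.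
rewrite eqU; lia.
Qed.

Function tauclose_comp_aux M s (X : {fset N}) {measure (tc_measure M s) X}
  : {fset N} :=
  if tauclose_stepf M s X == X then X
  else tauclose_comp_aux M s (tauclose_stepf M s X).
Proof.
intros; apply/ssrnat.ltP; apply: tauclose_stepf_decr.
by rewrite teq.
Defined.

Definition tauclose_comp M s : {fset N} := tauclose_comp_aux M s fset0.

End Tauclose.

(* Kleene iteration from the empty set stays below the least fixed point,
   since the step function is monotone; once it stops, the set reached is a
   fixed point, hence also above the least one. *)
From mathcomp Require Import all_boot finmap.
From mathcomp Require Import boolp classical_sets.
From Stdlib Require List.
From Stdlib Require Import FunInd.

Local Open Scope classical_set_scope.

Lemma has_In (A : Type) (p : pred A) (l : seq A) :
  has p l <-> exists2 e, List.In e l & p e.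
Proof.
elim: l => [|a l IH] /=; first by split=> // -[].
split.
  case/orP=> [pa|/IH[e ie pe]]; first by exists a; [left|].
  by exists e; [right|].
case=> e [<-|ie] pe; first by rewrite pe.
by apply/orP; right; apply/IH; exists e.
Qed.

Section TaucloseFixpoint.
Variables (N : choiceType) (Var Val : Type) (M : automaton N Var Val) (s : N).

Lemma tauclose_stepfE (X : {fset N}) :
  [set x | x \in tauclose_stepf M s X] = tauclose_step M s [set x | x \in X].
Proof.
apply/seteqP; split=> x; rewrite /tauclose_stepf /tauclose_step /= !inE.
  case/orP=> [/orP[/eqP->|xX]|/andP[xn /has_In[e ie /and3P[se na /eqP de]]]].
  - by left; left.
  - by left; right.
  - right; split=> //; exists e => //; split=> //.
    by case: (act e) na.
case=> [[->|xX]|[xn [e ie [se na de]]]].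
- by rewrite eqxx.
- by rewrite xX orbT.
- apply/orP; right; rewrite xn /=; apply/has_In; exists e => //.
  by rewrite se na de eqxx.
Qed.

Lemma tauclose_step_monotone {X Y : set N} :
  X `<=` Y -> tauclose_step M s X `<=` tauclose_step M s Y.
Proof.
move=> XY x [[->|Xx]|[xn [e ie [se na de]]]].
- by left; left.
- by left; right; apply: XY.
- by right; split=> //; exists e => //; split=> //; apply: XY.
Qed.

Lemma tauclose_least {X : set N} :
  tauclose_step M s X `<=` X -> tauclose M s `<=` X.
Proof. by move=> HX y; apply. Qed.

Lemma tauclose_step_closed : tauclose_step M s (tauclose M s) `<=` tauclose M s.
Proof.
move=> x Tx X XT; apply: (XT).
exact: tauclose_step_monotone (tauclose_least XT) _ Tx.
Qed.

Lemma tauclose_comp_auxE (X : {fset N}) :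
  [set x | x \in X] `<=` tauclose M s ->
  [set x | x \in tauclose_comp_aux M s X] = tauclose M s.
Proof.
functional induction (tauclose_comp_aux M s X) => XT.
- apply/seteqP; split=> //; apply: tauclose_least.
  by rewrite -tauclose_stepfE (eqP e).
- apply: IHf; rewrite tauclose_stepfE.
  exact: subset_trans (tauclose_step_monotone XT) tauclose_step_closed.
Qed.

End TaucloseFixpoint.

Theorem theorem3 (N : choiceType) (Var Val : Type)
  (M : automaton N Var Val) (s : N) :
  [set x | x \in tauclose_comp M s]%classic = tauclose M s.
Proof. by apply: tauclose_comp_auxE => x /=; rewrite inE. Qed.
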